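(* Let $n\ge2$, $R>0$, $\varepsilon>0$, and let $f$ be such that $r^{n-1}f\in L^1((0,R))$. Then the problem $-\varepsilon r^{n-1}\Big(\frac{1}{r^{n-1}}w_r\Big)_r+\frac{1}{n r^{n(n-1)}}w^n=L_f$ in $(0,R)$, $w(0)=w_r(0)=0$, $w_r(R)=\varepsilon R^{n-1}$, has at most one nonnegative classical solution.
   Context: $L_f(s):=\int_0^s t^{n-1}f(t)\,dt$. Subscripts $r$ denote derivatives in $r$. A classical solution is a twice differentiable function on $(0,R)$, continuously differentiable up to the endpoints, satisfying the equation and boundary conditions pointwise. (This problem is satisfied by $w=r^{n-1}u^\varepsilon_r$ for radial vanishing moment approximations $u^\varepsilon$ of the Monge–Ampère equation.) *)

From HB Require Import structures.
From mathcomp Require Import all_boot all_order all_algebra.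
From mathcomp Require Import all_classical all_reals all_analysis.
Set Implicit Arguments. Unset Strict Implicit. Unset Printing Implicit Defensive.
Import Order.TTheory GRing.Theory Num.Theory.
Import numFieldNormedType.Exports.
Local Open Scope classical_set_scope.
Local Open Scope ring_scope.

Definition Lf (R : realType) (n : nat) (f : R -> R) (s : R) : R :=
  \int[(@lebesgue_measure R)]_(t in `[0, s]) (t ^+ n.-1 * f t).

(* w is a classical solution of
     -eps r^{n-1} (w_r / r^{n-1})_r + w^n / (n r^{n(n-1)}) = L_f  in (0,R),
     w(0) = w_r(0) = 0,  w_r(R) = eps R^{n-1}.
   "Classical": w twice differentiable on (0,R), continuously differentiable up
   to the endpoints: there is dw, continuous on [0,R], which is the derivative
   of w on (0,R), the right derivative of w at 0 and the left derivative at R. *)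
Definition classical_solution (R : realType) (n : nat) (eps Rad : R)
    (f : R -> R) (w : R -> R) : Prop :=
  exists dw : R -> R,
    {within `[0, Rad], continuous w} /\
    {within `[0, Rad], continuous dw} /\
    (forall r, r \in `]0, Rad[ -> derivable w r 1 /\ derive1 w r = dw r) /\
    (fun h => h^-1 * (w h - w 0)) @ 0^'+ --> dw 0 /\
    (fun h => (h - Rad)^-1 * (w h - w Rad)) @ Rad^'- --> dw Rad /\
    (forall r, r \in `]0, Rad[ -> derivable dw r 1) /\
    (forall r, r \in `]0, Rad[ ->
       derivable (fun x => dw x / x ^+ n.-1) r 1 /\
       - eps * r ^+ n.-1 * derive1 (fun x => dw x / x ^+ n.-1) r
         + w r ^+ n / (n%:R * r ^+ (n * n.-1)) = Lf n f r) /\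
    w 0 = 0 /\ dw 0 = 0 /\ dw Rad = eps * Rad ^+ n.-1.

From HB Require Import structures.
From mathcomp Require Import all_boot all_order all_algebra.
From mathcomp Require Import all_classical all_reals all_analysis.
From mathcomp Require Import lra.
Import Order.TTheory GRing.Theory Num.Theory.
Import numFieldNormedType.Exports.
Local Open Scope classical_set_scope.
Local Open Scope ring_scope.

(* Let u := w1 - w2 and g := (w1' - w2') / r^(n-1), so that u' = r^(n-1) g and,
   subtracting the two equations, eps r^(n-1) g' = (w1^n - w2^n) / (n r^(n(n-1))),
   which is positive wherever u > 0 because w2 >= 0.  If u had a positive maximum
   at r0 in (0, R], g would be strictly increasing around r0: if g(r0) >= 0 and
   r0 < R, u increases to the right of r0; if g(r0) <= 0 (in particular at r0 = R,
   where g(R) = 0 by the boundary condition), u decreases towards r0 from the left.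
   Either way r0 is not a maximum, so u <= 0 since u(0) = 0; by symmetry w1 = w2. *)

Lemma near_at_left_itv {R : realFieldType} (x : R) (P : R -> Prop) :
  (\forall y \near x^'-, P y) -> exists2 a, a < x & {in `]a, x[, forall y, P y}.
Proof.
rewrite near_withinE => /nbhs_ballP[e /= e0 xeP].
exists (x - e); first by rewrite ltrBlDr ltrDl.
move=> y; rewrite in_itv /= => /andP[xey yx]; apply: xeP; last by [].
by rewrite -ball_normE /= ger0_norm ?subr_ge0 ?(ltW yx) // ltrBlDr -ltrBlDl.
Qed.

Lemma near_at_right_itv {R : realFieldType} (x : R) (P : R -> Prop) :
  (\forall y \near x^'+, P y) -> exists2 b, x < b & {in `]x, b[, forall y, P y}.
Proof.
rewrite near_withinE => /nbhs_ballP[e /= e0 xeP].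
exists (x + e); first by rewrite ltrDl.
move=> y; rewrite in_itv /= => /andP[xy yxe]; apply: xeP; last by [].
by rewrite -ball_normE /= distrC ger0_norm ?subr_ge0 ?(ltW xy) // ltrBlDl.
Qed.

Lemma derivable_cvg_at_left {R : realType} (f : R -> R) x :
  derivable f x 1 -> f @ x^'- --> f x.
Proof.
by move=> /derivable1_diffP/differentiable_continuous; apply: cvg_at_left_filter.
Qed.

Lemma derivable_cvg_at_right {R : realType} (f : R -> R) x :
  derivable f x 1 -> f @ x^'+ --> f x.
Proof.
by move=> /derivable1_diffP/differentiable_continuous; apply: cvg_at_right_filter.
Qed.

Section maximum_principle.
Context {R : realType} (k : nat) (Rad : R) (u g : R -> R).
Hypothesis Rad_gt0 : 0 < Rad.
Hypothesis u_cont : {within `[0, Rad], continuous u}.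
Hypothesis u0_le0 : u 0 <= 0.
Hypothesis u_deriv :
  {in `]0, Rad[, forall x, derivable u x 1 /\ derive1 u x = x ^+ k * g x}.
Hypothesis g_deriv :
  {in `]0, Rad[, forall x, derivable g x 1 /\ (0 < u x -> 0 < derive1 g x)}.
Hypothesis g_cvg_Rad : g @ Rad^'- --> g Rad.
Hypothesis g_Rad_le0 : g Rad <= 0.

Let in_itv0R {a b x : R} : 0 <= a -> b <= Rad -> x \in `]a, b[ -> x \in `]0, Rad[.
Proof.
move=> a0 bR; rewrite !in_itv /= => /andP[ax xb].
by rewrite (le_lt_trans a0 ax) (lt_le_trans xb bR).
Qed.

Let u_cont_sub {a b : R} : 0 <= a -> b <= Rad -> {within `[a, b], continuous u}.
Proof.
move=> a0 bR; apply: continuous_subspaceW u_cont.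
by apply: subset_itv; rewrite bnd_simp.
Qed.

Let g_cont_sub {a b : R} :
  0 < a -> a < b -> b <= Rad -> {within `[a, b], continuous g}.
Proof.
move=> a0 ab bR; apply: derivable_oo_LRcontinuous_within; split.
- by move=> x /(in_itv0R (ltW a0) bR) /g_deriv[].
- have /g_deriv[+ _] : a \in `]0, Rad[ by rewrite in_itv /= a0 (lt_le_trans ab bR).
  exact: derivable_cvg_at_right.
- move: bR; rewrite le_eqVlt => /predU1P[-> //|bR].
  have /g_deriv[+ _] : b \in `]0, Rad[ by rewrite in_itv /= bR (lt_trans a0 ab).
  exact: derivable_cvg_at_left.
Qed.

Let g_lt {a b x y : R} : 0 < a -> b <= Rad -> {in `]a, b[, forall t, 0 < u t} ->
  a <= x -> x < y -> y <= b -> g x < g y.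
Proof.
move=> a0 bR upos ax xy yb.
have itv_xy : {subset `]x, y[ <= `]a, b[}.
  by apply: subset_itv; rewrite bnd_simp.
apply: (@gtr0_derive1_lt_cc _ g x y); rewrite ?in_itv /= ?lexx ?(ltW xy) //.
- by move=> t /itv_xy /(in_itv0R (ltW a0) bR) /g_deriv[].
- move=> t /itv_xy tab; have /g_deriv[_] := in_itv0R (ltW a0) bR tab.
  by apply; apply: upos.
- exact: g_cont_sub (lt_le_trans a0 ax) xy (le_trans yb bR).
Qed.

Let u_lt_left {a b : R} : 0 < a -> a < b -> b <= Rad ->
  {in `]a, b[, forall t, 0 < u t} -> g b <= 0 -> u b < u a.
Proof.
move=> a0 ab bR upos gb_le0.
apply: (@ltr0_derive1_lt_cc _ u a b); rewrite ?in_itv /= ?lexx ?(ltW ab) //.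
- by move=> t /(in_itv0R (ltW a0) bR) /u_deriv[].
- move=> t tab; have /andP[ta tb] : a < t < b by move: tab; rewrite in_itv.
  have /u_deriv[_ ->] := in_itv0R (ltW a0) bR tab.
  rewrite pmulr_rlt0 ?exprn_gt0 ?(lt_trans a0 ta) //.
  exact: lt_le_trans (g_lt a0 bR upos (ltW ta) tb (lexx b)) gb_le0.
- exact: u_cont_sub (ltW a0) bR.
Qed.

Let u_lt_right {a b : R} : 0 < a -> a < b -> b <= Rad ->
  {in `]a, b[, forall t, 0 < u t} -> 0 <= g a -> u a < u b.
Proof.
move=> a0 ab bR upos ga_ge0.
apply: (@gtr0_derive1_lt_cc _ u a b); rewrite ?in_itv /= ?lexx ?(ltW ab) //.
- by move=> t /(in_itv0R (ltW a0) bR) /u_deriv[].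
- move=> t tab; have /andP[ta tb] : a < t < b by move: tab; rewrite in_itv.
  have /u_deriv[_ ->] := in_itv0R (ltW a0) bR tab.
  rewrite pmulr_rgt0 ?exprn_gt0 ?(lt_trans a0 ta) //.
  exact: le_lt_trans ga_ge0 (g_lt a0 bR upos (lexx a) ta (ltW tb)).
- exact: u_cont_sub (ltW a0) bR.
Qed.

Lemma max_principle : {in `[0, Rad], forall x, u x <= 0}.
Proof.
have [r rI u_max] := EVT_max (ltW Rad_gt0) u_cont.
suff ur_le0 : u r <= 0 by move=> x /u_max /le_trans; apply.
rewrite leNgt; apply/negP => ur_gt0.
have [r_gt0 rR] : 0 < r /\ r <= Rad.
  move: rI; rewrite in_itv /= => /andP[]; rewrite le_eqVlt => /predU1P[r0|-> ->//].
  by move: ur_gt0; rewrite -r0 ltNge u0_le0.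
have in0R y : 0 < y -> y <= Rad -> y \in `[0, Rad].
  by move=> y0 yR; rewrite in_itv /= (ltW y0) yR.
have not_left : g r <= 0 -> False.
  move=> gr_le0.
  have [_ _ u_left] := (continuous_within_itvP _ r_gt0).1 (u_cont_sub (lexx 0) rR).
  have [a ar aP] : exists2 a, a < r & {in `]a, r[, forall y, 0 < y /\ 0 < u y}.
    apply: near_at_left_itv.
    by near=> y; split; near: y; [exact: nbhs_left_gt | exact: cvgr_gt u_left _ ur_gt0].
  have yar := mid_in_itvoo ar; have [y_gt0 _] := aP _ yar.
  set y := (a + r) / 2 in yar y_gt0.
  have /andP[ay yr] : a < y < r by move: yar; rewrite in_itv.
  have := u_max y (in0R y y_gt0 (ltW (lt_le_trans yr rR))).
  rewrite leNgt (u_lt_left y_gt0 yr rR) // => t tyr.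
  apply: (aP t _).2; move: tyr; rewrite !in_itv /= => /andP[yt ->].
  by rewrite (lt_trans ay yt).
have [rRad|Rr] := ltP r Rad; last first.
  by apply: not_left; have -> : r = Rad by apply: le_anti; rewrite rR Rr.
have [gr_ge0|gr_lt0] := leP 0 (g r); last exact/not_left/ltW.
have r0R : r \in `]0, Rad[ by rewrite in_itv /= r_gt0 rRad.
have u_right : u @ r^'+ --> u r.
  by have /u_deriv[+ _] := r0R; exact: derivable_cvg_at_right.
have [b rb bP] : exists2 b, r < b & {in `]r, b[, forall y, y < Rad /\ 0 < u y}.
  apply: near_at_right_itv.
  by near=> y; split; near: y; [exact: nbhs_right_lt | exact: cvgr_gt u_right _ ur_gt0].
have yrb := mid_in_itvoo rb; have [yR _] := bP _ yrb.
set y := (r + b) / 2 in yrb yR.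
have /andP[ry yb] : r < y < b by move: yrb; rewrite in_itv.
have := u_max y (in0R y (lt_trans r_gt0 ry) (ltW yR)).
rewrite leNgt (u_lt_right r_gt0 ry (ltW yR)) // => t try.
apply: (bP t _).2; move: try; rewrite !in_itv /= => /andP[-> ty].
by rewrite (lt_trans ty yb).
Unshelve. all: by end_near.
Qed.

End maximum_principle.

Section comparison.
Context {R : realType} {n : nat} {eps Rad : R} {f : R -> R}.
Hypotheses (n_gt0 : (0 < n)%N) (Rad_gt0 : 0 < Rad) (eps_gt0 : 0 < eps).

Let flux (dw : R -> R) x := dw x / x ^+ n.-1.

Let lt_flux_derive_of_eq x a1 a2 v1 v2 L : 0 < x -> 0 <= v2 -> v2 < v1 ->
  - eps * x ^+ n.-1 * a1 + v1 ^+ n / (n%:R * x ^+ (n * n.-1)) = L ->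
  - eps * x ^+ n.-1 * a2 + v2 ^+ n / (n%:R * x ^+ (n * n.-1)) = L -> a2 < a1.
Proof.
move=> x_gt0 v2_ge0 v21 e1 e2.
have D_gt0 : 0 < n%:R * x ^+ (n * n.-1) by rewrite mulr_gt0 ?ltr0n ?exprn_gt0.
have v_lt : v2 ^+ n / (n%:R * x ^+ (n * n.-1)) < v1 ^+ n / (n%:R * x ^+ (n * n.-1)).
  by rewrite ltr_pM2r ?invr_gt0 // ltrXn2r -?lt0n // (le_trans v2_ge0 (ltW v21)).
have c_gt0 : 0 < eps * x ^+ n.-1 by rewrite mulr_gt0 ?exprn_gt0.
rewrite -subr_gt0 -(pmulr_rgt0 _ c_gt0); rewrite !mulNr in e1 e2; move: e1 e2 v_lt.
set c := eps * _; set V1 := _ / _; set V2 := _ / _ => e1 e2 v_lt.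
have -> : c * (a1 - a2) = V1 - V2 by rewrite mulrBr; lra.
by rewrite subr_gt0.
Qed.

Let flux_cvg_Rad dw :
  {within `[0, Rad], continuous dw} -> flux dw @ Rad^'- --> flux dw Rad.
Proof.
move=> /(continuous_within_itvP _ Rad_gt0)[_ _ dw_left].
apply: cvgM dw_left _; apply: cvgV; first by rewrite expf_neq0 ?gt_eqF.
by apply: cvg_at_left_filter; exact: exprn_continuous.
Qed.

Lemma classical_solution_le {w1 w2 : R -> R} :
  classical_solution n eps Rad f w1 -> classical_solution n eps Rad f w2 ->
  {in `[0, Rad], forall r, 0 <= w2 r} -> {in `[0, Rad], forall r, w1 r <= w2 r}.
Proof.
move=> [d1 [w1_cont [d1_cont [w1_deriv [_ [_ [_ [eq1 [w10 [_ d1R]]]]]]]]]].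
move=> [d2 [w2_cont [d2_cont [w2_deriv [_ [_ [_ [eq2 [w20 [_ d2R]]]]]]]]]] w2_ge0.
have in_cc x : x \in `]0, Rad[ -> x \in `[0, Rad].
  by rewrite !in_itv /= => /andP[/ltW -> /ltW ->].
suff : {in `[0, Rad], forall r, (w1 - w2) r <= 0}.
  by move=> le0 r /le0; rewrite subr_le0.
apply: (@max_principle _ n.-1 _ _ (flux d1 - flux d2)) => //.
- exact: within_continuousB.
- by rewrite !fctE w10 w20 subrr.
- move=> x x0R; have [dw1 dw1E] := w1_deriv x x0R; have [dw2 dw2E] := w2_deriv x x0R.
  split; first exact: derivableB.
  rewrite derive1E deriveB // -!derive1E dw1E dw2E /flux /= mulrBr.
  have xk_neq0 : x ^+ n.-1 != 0.
    by rewrite expf_neq0 // gt_eqF //; move: x0R; rewrite in_itv /= => /andP[].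
  by rewrite !(mulrC (x ^+ n.-1)) !divfK.
- move=> x x0R; have [dg1 eq1x] := eq1 x x0R; have [dg2 eq2x] := eq2 x x0R.
  split; first exact: derivableB.
  rewrite /= subr_gt0 derive1E deriveB // -!derive1E subr_gt0 => w21.
  apply: lt_flux_derive_of_eq eq1x eq2x; last exact: w21.
    by move: x0R; rewrite in_itv /= => /andP[].
  exact/w2_ge0/in_cc.
- by apply: cvgB; apply: flux_cvg_Rad.
- by rewrite !fctE /flux d1R d2R subrr.
Qed.

End comparison.

Theorem theorem3p3 (R : realType) (n : nat) (Rad eps : R) (f : R -> R) :
  (2 <= n)%N -> 0 < Rad -> 0 < eps ->
  (@lebesgue_measure R).-integrable `]0, Rad[ (fun t => (t ^+ n.-1 * f t)%:E) ->
  forall w1 w2 : R -> R,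
    classical_solution n eps Rad f w1 -> (forall r, r \in `[0, Rad] -> 0 <= w1 r) ->
    classical_solution n eps Rad f w2 -> (forall r, r \in `[0, Rad] -> 0 <= w2 r) ->
    forall r, r \in `[0, Rad] -> w1 r = w2 r.
Proof.
move=> n_ge2 Rad_gt0 eps_gt0 _ w1 w2 sol1 w1_ge0 sol2 w2_ge0 r r0R.
have n_gt0 : (0 < n)%N by apply: leq_trans n_ge2.
have le12 := classical_solution_le n_gt0 Rad_gt0 eps_gt0 sol1 sol2 w2_ge0.
have le21 := classical_solution_le n_gt0 Rad_gt0 eps_gt0 sol2 sol1 w1_ge0.
by apply: le_anti; rewrite le12 ?le21.
Qed.
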